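(* Let $t_0,t_1$ be closed terms with $t_0\approx_{\emptyset}t_1$. Let $\mathcal E_0$ be the set of pairs of closed normal forms related by $\widetilde{\approx_{\emptyset}}$. Then for every context $C$ such that $C[t_0]$ and $C[t_1]$ are closed, $C[t_0]\approx_{\mathcal E_0}C[t_1]$.
   Context: Terms of $\lambda_S$: $t ::= x \mid \lambda x.t \mid t\,t \mid \mathcal{S}k.t \mid \langle t\rangle$ (shift binds $k$; $\langle\cdot\rangle$ reset), up to $\alpha$-conversion. Values $v::=\lambda x.t$. Pure contexts $E ::= \Box \mid v\,E \mid E\,t$; evaluation contexts $F ::= \Box \mid v\,F \mid F\,t \mid \langle F\rangle$; contexts $C ::= \Box \mid \lambda x.C \mid t\,C \mid C\,t \mid \mathcal{S}k.C \mid \langle C\rangle$. Reduction: $F[(\lambda x.t)v]\to F[t\{v/x\}]$; $F[\langle E[\mathcal Sk.t]\rangle]\to F[\langle t\{\lambda x.\langle E[x]\rangle/k\}\rangle]$ ($x\notin\mathrm{fv}(E)$); $F[\langle v\rangle]\to F[v]$; $\to^*$ reflexive-transitive closure. Stuck term: not a value and irreducible; normal form: value or stuck term. Closures: for $R$ a relation on closed terms, $\widetilde R$ is the smallest relation containing $R$, all $(x,x)$, closed under all term constructors, restricted to closed terms; $\widehat R$ is the smallest relation on closed evaluation contexts with $\Box\widehat R\Box$, $v_0F_0\widehat Rv_1F_1$ if $F_0\widehat RF_1,v_0\widetilde Rv_1$; $F_0t_0\widehat RF_1t_1$ if $F_0\widehat RF_1,t_0\widetilde Rt_1$; $\langle F_0\rangle\widehat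 R\langle F_1\rangle$ if $F_0\widehat RF_1$. Environmental bisimilarity: an environment $\mathcal E$ is a relation on closed normal forms relating values only with values and stuck terms only with stuck terms; an environmental relation $\mathcal X$ is a set of environments and triples $(\mathcal E,t_0,t_1)$ with $t_0,t_1$ closed, written $t_0\mathcal X_{\mathcal E}t_1$. $\mathcal X$ is an environmental bisimulation if (1) whenever $t_0\mathcal X_{\mathcal E}t_1$: (a) $t_0\to t_0'$ implies $t_1\to^*t_1'$ with $t_0'\mathcal X_{\mathcal E}t_1'$; (b) if $t_0$ is a value $v_0$ then $t_1\to^*v_1$, a value, with $\mathcal E\cup\{(v_0,v_1)\}\in\mathcal X$; (c) if $t_0$ is stuck then $t_1\to^*t_1'$ stuck with $\mathcal E\cup\{(t_0,t_1')\}\in\mathcal X$; (d) symmetric conditions for $t_1$; (2) whenever $\mathcal E\in\mathcal X$: (a) $(\lambda x.t_0)\mathcal E(\lambda x.t_1)$ and $v_0\widetilde{\mathcal E}v_1$ imply $t_0\{v_0/x\}\mathcal X_{\mathcal E}t_1\{v_1/x\}$; (b) $E_0[\mathcal Sk.t_0]\mathcal EE_1[\mathcal Sk.t_1]$ and pure $E_0'\widehat{\mathcal E}E_1'$ imply $\langle t_0\{\lambda x.\langle E_0'[E_0[x]]\rangle/k\}\rangle\mathcal X_{\mathcal E}\langle t_1\{\lambda x.\langle E_1'[E_1[x]]\rangle/k\}\rangle$, $x$ fresh. $\approx$ is the largest environmental bisimulation; $t_0\approx_{\mathcal E}t_1$ means $(\mathcal E,t_0,t_1)\in\approx$; $\approx_\emptyset$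 is viewed as a relation on closed terms. *)

(* lambda_S (shift/reset) with de Bruijn indices
   (terms up to alpha-conversion), and environmental bisimilarity. *)
From Stdlib Require Import Arith.

Inductive term : Type :=
| Var : nat -> term
| Lam : term -> term
| App : term -> term -> term
| Shift : term -> term          (* S k. t       : body binds index 0 (= k) *)
| Reset : term -> term.

Fixpoint wf (k : nat) (t : term) : Prop :=
  match t with
  | Var n => n < k
  | Lam b => wf (S k) b
  | App a b => wf k a /\ wf k b
  | Shift b => wf (S k) b
  | Reset b => wf k b
  end.

Definition closed (t : term) : Prop := wf 0 t.

Definition is_value (t : term) : Prop :=
  match t with Lam _ => True | _ => False end.

Fixpoint lift (c : nat) (t : term) : term :=
  match t with
  | Var n => if n <? c then Var n else Var (S n)
  | Lam b => Lam (lift (S c) b)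
  | App a b => App (lift c a) (lift c b)
  | Shift b => Shift (lift (S c) b)
  | Reset b => Reset (lift c b)
  end.

(* capture-avoiding substitution of s for index j (removing that binder) *)
Fixpoint subst (j : nat) (s : term) (t : term) : term :=
  match t with
  | Var n => if n =? j then s else if n <? j then Var n else Var (pred n)
  | Lam b => Lam (subst (S j) (lift 0 s) b)
  | App a b => App (subst j s a) (subst j s b)
  | Shift b => Shift (subst (S j) (lift 0 s) b)
  | Reset b => Reset (subst j s b)
  end.

(* t{v/x} where x is the outermost bound variable of the body t *)
Definition subst0 (t v : term) : term := subst 0 v t.

(* evaluation-context skeletons; F ::= [] | v F | F t | <F>  *)
Inductive ectx : Type :=
| EHole : ectx
| EAppR : term -> ectx -> ectx
| EAppL : ectx -> term -> ectx
| EReset : ectx -> ectx.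

Fixpoint plugE (F : ectx) (t : term) : term :=
  match F with
  | EHole => t
  | EAppR v F' => App v (plugE F' t)
  | EAppL F' u => App (plugE F' t) u
  | EReset F' => Reset (plugE F' t)
  end.

Fixpoint liftE (c : nat) (F : ectx) : ectx :=
  match F with
  | EHole => EHole
  | EAppR v F' => EAppR (lift c v) (liftE c F')
  | EAppL F' u => EAppL (liftE c F') (lift c u)
  | EReset F' => EReset (liftE c F')
  end.

Fixpoint is_eval (F : ectx) : Prop :=
  match F with
  | EHole => True
  | EAppR v F' => is_value v /\ is_eval F'
  | EAppL F' _ => is_eval F'
  | EReset F' => is_eval F'
  end.

Fixpoint is_pure (F : ectx) : Prop :=
  match F with
  | EHole => True
  | EAppR v F' => is_value v /\ is_pure F'
  | EAppL F' _ => is_pure F'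
  | EReset _ => False
  end.

Inductive ctx : Type :=
| CHole : ctx
| CLam : ctx -> ctx
| CAppR : term -> ctx -> ctx
| CAppL : ctx -> term -> ctx
| CShift : ctx -> ctx
| CReset : ctx -> ctx.

(* plugging may capture variables *)
Fixpoint plugC (C : ctx) (t : term) : term :=
  match C with
  | CHole => t
  | CLam C' => Lam (plugC C' t)
  | CAppR u C' => App u (plugC C' t)
  | CAppL C' u => App (plugC C' t) u
  | CShift C' => Shift (plugC C' t)
  | CReset C' => Reset (plugC C' t)
  end.

Inductive step : term -> term -> Prop :=
| step_beta : forall F t v, is_eval F -> is_value v ->
    step (plugE F (App (Lam t) v)) (plugE F (subst0 t v))
| step_shift : forall F E t, is_eval F -> is_pure E ->
    step (plugE F (Reset (plugE E (Shift t))))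
         (plugE F (Reset (subst0 t (Lam (Reset (plugE (liftE 0 E) (Var 0)))))))
| step_reset : forall F v, is_eval F -> is_value v ->
    step (plugE F (Reset v)) (plugE F v).

Inductive steps : term -> term -> Prop :=
| steps_refl : forall t, steps t t
| steps_step : forall t t' t'', step t t' -> steps t' t'' -> steps t t''.

Definition stuck (t : term) : Prop := ~ is_value t /\ forall t', ~ step t t'.
Definition normal_form (t : term) : Prop := is_value t \/ stuck t.

Definition rel := term -> term -> Prop.

(* R~ (compatible closure, before restriction to closed terms) *)
Inductive tildeI (R : rel) : rel :=
| ti_base : forall a b, R a b -> tildeI R a b
| ti_var : forall n, tildeI R (Var n) (Var n)
| ti_lam : forall a b, tildeI R a b -> tildeI R (Lam a) (Lam b)
| ti_app : forall a b c d, tildeI R a b -> tildeI R c d ->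
    tildeI R (App a c) (App b d)
| ti_shift : forall a b, tildeI R a b -> tildeI R (Shift a) (Shift b)
| ti_reset : forall a b, tildeI R a b -> tildeI R (Reset a) (Reset b).

Definition tilde (R : rel) : rel :=
  fun a b => tildeI R a b /\ closed a /\ closed b.

Inductive hat (R : rel) : ectx -> ectx -> Prop :=
| hat_hole : hat R EHole EHole
| hat_appR : forall v0 v1 F0 F1, is_value v0 -> is_value v1 ->
    hat R F0 F1 -> tilde R v0 v1 -> hat R (EAppR v0 F0) (EAppR v1 F1)
| hat_appL : forall F0 F1 t0 t1, hat R F0 F1 -> tilde R t0 t1 ->
    hat R (EAppL F0 t0) (EAppL F1 t1)
| hat_reset : forall F0 F1, hat R F0 F1 -> hat R (EReset F0) (EReset F1).

Definition is_env (E : rel) : Prop :=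
  forall a b, E a b ->
    closed a /\ closed b /\ normal_form a /\ normal_form b /\
    ((is_value a /\ is_value b) \/ (stuck a /\ stuck b)).

Definition add_pair (E : rel) (a b : term) : rel :=
  fun x y => E x y \/ (x = a /\ y = b).

Record envrel : Type := {
  envs : rel -> Prop;
  trip : rel -> term -> term -> Prop
}.

Definition envrel_wf (X : envrel) : Prop :=
  (forall E, envs X E -> is_env E) /\
  (forall E t0 t1, trip X E t0 t1 -> is_env E /\ closed t0 /\ closed t1).

Definition env_bisim (X : envrel) : Prop :=
  envrel_wf X /\
  (forall E t0 t1, trip X E t0 t1 ->
     (forall t0', step t0 t0' -> exists t1', steps t1 t1' /\ trip X E t0' t1') /\
     (is_value t0 -> exists v1, steps t1 v1 /\ is_value v1 /\
                                envs X (add_pair E t0 v1)) /\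
     (stuck t0 -> exists t1', steps t1 t1' /\ stuck t1' /\
                              envs X (add_pair E t0 t1')) /\
     (forall t1', step t1 t1' -> exists t0', steps t0 t0' /\ trip X E t0' t1') /\
     (is_value t1 -> exists v0, steps t0 v0 /\ is_value v0 /\
                                envs X (add_pair E v0 t1)) /\
     (stuck t1 -> exists t0', steps t0 t0' /\ stuck t0' /\
                              envs X (add_pair E t0' t1))) /\
  (forall E, envs X E ->
     (forall b0 b1 v0 v1, E (Lam b0) (Lam b1) -> is_value v0 -> is_value v1 ->
        tilde E v0 v1 -> trip X E (subst0 b0 v0) (subst0 b1 v1)) /\
     (forall E0 E1 s0 s1, is_pure E0 -> is_pure E1 ->
        E (plugE E0 (Shift s0)) (plugE E1 (Shift s1)) ->
        forall E0' E1', is_pure E0' -> is_pure E1' -> hat E E0' E1' ->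
        trip X E
          (Reset (subst0 s0 (Lam (Reset (plugE (liftE 0 E0') (plugE (liftE 0 E0) (Var 0)))))))
          (Reset (subst0 s1 (Lam (Reset (plugE (liftE 0 E1') (plugE (liftE 0 E1) (Var 0))))))))).

Definition approx (E : rel) (t0 t1 : term) : Prop :=
  exists X, env_bisim X /\ trip X E t0 t1.

Definition empty_rel : rel := fun _ _ => False.

Definition approx0 : rel := fun t0 t1 => approx empty_rel t0 t1.

Definition E0 : rel :=
  fun a b => normal_form a /\ normal_form b /\ tilde approx0 a b.

From Stdlib Require Import Arith Lia List Classical.

(* Howe's method for a coinductive similarity [sim] that tests a value by
   applying it to every closed value and a stuck term E[Sk.t] by capturing it
   under every closed pure context.  The Howe closure of open similarity is
   compatible and substitutive, and it is preserved by reduction on the left;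
   the delicate case is a shift, where the pure context on the left is matched
   frame by frame.  Hence [sim] is a precongruence on closed terms.  Every
   environmental bisimulation relates only mutually similar terms, so the
   compatible closure of approx_emptyset lies in mutual similarity; conversely,
   mutual similarity, with environments of mutually similar normal forms, is an
   environmental bisimulation, and it relates C[t0] to C[t1]. *)

Ltac case_nat_tests :=
  repeat (match goal with
          | |- context [?a =? ?b] => destruct (Nat.eqb_spec a b)
          | |- context [?a <? ?b] => destruct (Nat.ltb_spec a b)
          end; simpl).

Lemma wf_weaken : forall t k k', wf k t -> k <= k' -> wf k' t.
Proof.
  induction t; simpl; intros; try lia; intuition eauto with arith.
Qed.

Lemma lift_wf : forall t k c, wf k t -> k <= c -> lift c t = t.
Proof.
  induction t; simpl; intros k c Hw Hk.
  - case_nat_tests; auto; lia.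
  - f_equal; eapply IHt; eauto; lia.
  - destruct Hw; f_equal; eauto.
  - f_equal; eapply IHt; eauto; lia.
  - f_equal; eauto.
Qed.

Lemma lift_closed : forall t c, closed t -> lift c t = t.
Proof. intros; eapply lift_wf; eauto; lia. Qed.

Lemma subst_wf : forall t k j s, wf k t -> k <= j -> subst j s t = t.
Proof.
  induction t; simpl; intros k j s Hw Hk.
  - case_nat_tests; auto; lia.
  - f_equal; eapply IHt; eauto; lia.
  - destruct Hw; f_equal; eauto.
  - f_equal; eapply IHt; eauto; lia.
  - f_equal; eauto.
Qed.

Lemma subst_closed : forall t j s, closed t -> subst j s t = t.
Proof. intros; eapply subst_wf; eauto; lia. Qed.

Lemma wf_subst : forall t k j s, wf (S k) t -> closed s -> j <= k -> wf k (subst j s t).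
Proof.
  induction t; simpl; intros k j s Hw Hs Hj;
    try rewrite lift_closed by auto; intuition eauto with arith.
  case_nat_tests; try lia. eapply wf_weaken; eauto; lia.
Qed.

Lemma closed_subst0 : forall t s, wf 1 t -> closed s -> closed (subst0 t s).
Proof. intros; apply wf_subst; auto. Qed.

Lemma subst_subst_closed : forall t i j v w, closed v -> closed w -> i <= j ->
  subst i w (subst (S j) v t) = subst j v (subst i w t).
Proof.
  induction t; intros i j v w Hv Hw Hij; simpl; try rewrite !lift_closed by auto;
    try (f_equal; auto with arith; fail).
  case_nat_tests; try reflexivity; try lia;
    try (rewrite subst_closed by auto; reflexivity); f_equal; lia.
Qed.

(* The head of the list replaces index 0, the next one index 1, and so on. *)
Fixpoint msubst (vs : list term) (t : term) : term :=
  match vs with nil => t | v :: vs' => msubst vs' (subst 0 v t) end.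

Fixpoint insert_at (j : nat) (v : term) (vs : list term) : list term :=
  match j, vs with
  | 0, _ => v :: vs
  | S j', w :: ws => w :: insert_at j' v ws
  | S _, nil => v :: nil
  end.

Lemma msubst_subst : forall vs j v t, Forall closed vs -> closed v -> j <= length vs ->
  msubst vs (subst j v t) = msubst (insert_at j v vs) t.
Proof.
  induction vs; intros j v t Hvs Hv Hj; destruct j; simpl in *; try reflexivity; try lia.
  inversion Hvs; subst. rewrite subst_subst_closed by (auto; lia). apply IHvs; auto; lia.
Qed.

Lemma length_insert_at : forall j v vs, length (insert_at j v vs) = S (length vs).
Proof. induction j; destruct vs; simpl; auto. Qed.

Lemma Forall_insert_at : forall (P : term -> Prop) j v vs,
  Forall P vs -> P v -> Forall P (insert_at j v vs).
Proof. induction j; destruct vs; simpl; intros Hvs Hv; inversion Hvs; auto. Qed.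

Lemma msubst_closed : forall vs t, closed t -> msubst vs t = t.
Proof. induction vs; simpl; intros; auto. rewrite subst_closed; auto. Qed.

Fixpoint compE (A B : ectx) : ectx :=
  match A with
  | EHole => B
  | EAppR v A' => EAppR v (compE A' B)
  | EAppL A' u => EAppL (compE A' B) u
  | EReset A' => EReset (compE A' B)
  end.

Lemma plugE_comp : forall A B t, plugE (compE A B) t = plugE A (plugE B t).
Proof. induction A; simpl; intros; f_equal; auto. Qed.

Lemma liftE_comp : forall A B c, liftE c (compE A B) = compE (liftE c A) (liftE c B).
Proof. induction A; simpl; intros; f_equal; auto. Qed.

Lemma is_eval_comp : forall A B, is_eval A -> is_eval B -> is_eval (compE A B).
Proof. induction A; simpl; intuition. Qed.

Lemma is_pure_comp : forall A B, is_pure A -> is_pure B -> is_pure (compE A B).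
Proof. induction A; simpl; intuition. Qed.

Lemma is_pure_is_eval : forall E, is_pure E -> is_eval E.
Proof. induction E; simpl; intuition. Qed.

Fixpoint wfE (k : nat) (F : ectx) : Prop :=
  match F with
  | EHole => True
  | EAppR v F' => wf k v /\ wfE k F'
  | EAppL F' u => wfE k F' /\ wf k u
  | EReset F' => wfE k F'
  end.

Lemma wf_plugE : forall F k t, wf k (plugE F t) <-> wfE k F /\ wf k t.
Proof. induction F; simpl; intros; try rewrite IHF; intuition. Qed.

Lemma closed_plugE_inv : forall F t, closed (plugE F t) -> wfE 0 F /\ closed t.
Proof. intros F t; apply wf_plugE. Qed.

Lemma wfE_weaken : forall F k k', wfE k F -> k <= k' -> wfE k' F.
Proof. induction F; simpl; intuition eauto using wf_weaken. Qed.

Lemma liftE_wfE : forall F k c, wfE k F -> k <= c -> liftE c F = F.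
Proof. induction F; simpl; intuition; f_equal; eauto using lift_wf. Qed.

Lemma wfE_comp : forall A B k, wfE k (compE A B) <-> wfE k A /\ wfE k B.
Proof. induction A; simpl; intros; try rewrite IHA; intuition. Qed.

(* The captured continuation [fun x => <G[E[x]]>] of a shift under the pure
   context [E], further wrapped in the pure context [G]. *)
Definition kont (G E : ectx) : term :=
  Lam (Reset (plugE (liftE 0 G) (plugE (liftE 0 E) (Var 0)))).

Lemma kont_comp : forall G A B, kont G (compE A B) = kont (compE G A) B.
Proof. intros; unfold kont. rewrite !liftE_comp, !plugE_comp. reflexivity. Qed.

Lemma kont_closed : forall G E, wfE 0 G -> wfE 0 E -> closed (kont G E).
Proof.
  intros G E HG HE; unfold kont, closed; simpl.
  rewrite (liftE_wfE G 0), (liftE_wfE E 0) by (auto; lia).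
  apply wf_plugE; split; [eapply wfE_weaken; eauto|].
  apply wf_plugE; split; [eapply wfE_weaken; eauto|simpl; lia].
Qed.

Lemma closed_reset_kont : forall t G E, wf 1 t -> wfE 0 G -> wfE 0 E ->
  closed (Reset (subst0 t (kont G E))).
Proof. intros. apply closed_subst0; auto. apply kont_closed; auto. Qed.

Inductive contract : term -> term -> Prop :=
| contract_beta : forall t v, is_value v -> contract (App (Lam t) v) (subst0 t v)
| contract_shift : forall E t, is_pure E ->
    contract (Reset (plugE E (Shift t)))
             (Reset (subst0 t (Lam (Reset (plugE (liftE 0 E) (Var 0))))))
| contract_reset : forall v, is_value v -> contract (Reset v) v.

Lemma step_contract : forall s s', step s s' ->
  exists F r r', is_eval F /\ contract r r' /\ s = plugE F r /\ s' = plugE F r'.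
Proof. intros s s' H; destruct H; do 3 eexists; repeat split; eauto; constructor; auto. Qed.

Lemma contract_step : forall F r r', is_eval F -> contract r r' ->
  step (plugE F r) (plugE F r').
Proof. intros F r r' HF Hr; destruct Hr; constructor; auto. Qed.

Lemma pure_shift_not_value : forall E t, ~ is_value (plugE E (Shift t)).
Proof. destruct E; simpl; auto. Qed.

Lemma plug_contract_not_value : forall F r r', contract r r' -> ~ is_value (plugE F r).
Proof. destruct F; simpl; intros r r' Hr; auto. destruct Hr; simpl; auto. Qed.

Lemma pure_shift_not_plug_contract : forall E t F r r', is_pure E -> is_eval F ->
  contract r r' -> plugE E (Shift t) <> plugE F r.
Proof.
  induction E; intros s F r r' HE HF Hr Heq; destruct F; simpl in *;
    try discriminate; try contradiction.
  - subst r; inversion Hr.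
  - subst r; inversion Hr; subst. eapply pure_shift_not_value; eassumption.
  - destruct HE, HF. injection Heq as <- Heq. eapply IHE; eassumption.
  - destruct HE as [Hv _]. injection Heq as Heq _. subst.
    eapply plug_contract_not_value; eauto.
  - subst r; inversion Hr; subst. destruct E; discriminate.
  - destruct HF as [Hv _]. injection Heq as Heq _. subst.
    eapply pure_shift_not_value; eassumption.
  - injection Heq as Heq _. eapply IHE; eassumption.
Qed.

Lemma contract_in_contract : forall r F q q' r', is_eval F ->
  contract q q' -> contract r r' -> plugE F q = r -> F = EHole.
Proof.
  intros r F q q' r' HF Hq Hr Heq. destruct F; auto; exfalso; simpl in *;
    destruct Hr; try discriminate; injection Heq as Heq; subst.
  - apply (plug_contract_not_value F q q'); auto.
  - apply (plug_contract_not_value F q q'); auto. rewrite Heq; simpl; auto.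
  - eapply pure_shift_not_plug_contract; eauto.
  - apply (plug_contract_not_value F q q'); auto.
Qed.

Lemma plug_contract_unique : forall F F' r r' q q', is_eval F -> is_eval F' ->
  contract r q -> contract r' q' -> plugE F r = plugE F' r' -> F = F' /\ r = r'.
Proof.
  induction F; intros F' r r' q q' HF HF' Hr Hr' Heq; simpl in *.
  - assert (F' = EHole) by (symmetry in Heq; apply (contract_in_contract r F' r' q' q); auto).
    subst; auto.
  - destruct F'; simpl in *.
    + exfalso. assert (EAppR t F = EHole) by
        (apply (contract_in_contract r' (EAppR t F) r q q'); auto).
      discriminate.
    + injection Heq as <- Heq. destruct HF, HF'.
      destruct (IHF F' r r' q q'); subst; auto.
    + injection Heq as Heq _. destruct HF. subst.
      exfalso; apply (plug_contract_not_value F' r' q'); auto.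
    + discriminate.
  - destruct F'; simpl in *.
    + exfalso. assert (EAppL F t = EHole) by
        (apply (contract_in_contract r' (EAppL F t) r q q'); auto).
      discriminate.
    + injection Heq as Heq _. destruct HF'. subst.
      exfalso; apply (plug_contract_not_value F r q); auto.
    + injection Heq as Heq <-. destruct (IHF F' r r' q q'); subst; auto.
    + discriminate.
  - destruct F'; simpl in *; try discriminate.
    + exfalso. assert (EReset F = EHole) by
        (apply (contract_in_contract r' (EReset F) r q q'); auto).
      discriminate.
    + injection Heq as Heq. destruct (IHF F' r r' q q'); subst; auto.
Qed.

Lemma plug_pure_shift_inj : forall E E' t t', is_pure E -> is_pure E' ->
  plugE E (Shift t) = plugE E' (Shift t') -> E = E' /\ t = t'.
Proof.
  induction E; intros E' s s' HE HE' Heq; destruct E'; simpl in *;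
    try discriminate; try contradiction.
  - injection Heq as <-; auto.
  - injection Heq as <- Heq. destruct HE, HE'.
    destruct (IHE E' s s'); subst; auto.
  - injection Heq as Heq _. destruct HE. subst.
    exfalso; eapply pure_shift_not_value; eassumption.
  - injection Heq as Heq _. destruct HE'. subst.
    exfalso; eapply pure_shift_not_value; eassumption.
  - injection Heq as Heq <-. destruct (IHE E' s s'); subst; auto.
Qed.

Lemma contract_deterministic : forall r a b, contract r a -> contract r b -> a = b.
Proof.
  intros r a b Ha Hb; destruct Ha; inversion Hb; subst; auto.
  - match goal with H : plugE _ _ = plugE _ _ |- _ =>
      apply plug_pure_shift_inj in H as [-> ->]; auto end.
  - exfalso; eapply pure_shift_not_value; eassumption.
  - exfalso; eapply pure_shift_not_value; eassumption.
Qed.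

Lemma step_deterministic : forall s a b, step s a -> step s b -> a = b.
Proof.
  intros s a b Ha Hb.
  destruct (step_contract _ _ Ha) as [F [r [r' [HF [Hr [-> ->]]]]]].
  destruct (step_contract _ _ Hb) as [G [q [q' [HG [Hq [Heq ->]]]]]].
  destruct (plug_contract_unique F G r q r' q') as [-> ->]; auto.
  f_equal. eapply contract_deterministic; eauto.
Qed.

Lemma value_irreducible : forall v x, is_value v -> ~ step v x.
Proof.
  intros v x Hv Hs. destruct (step_contract _ _ Hs) as [F [r [r' [_ [Hr [-> _]]]]]].
  eapply plug_contract_not_value; eauto.
Qed.

Lemma pure_shift_irreducible : forall E t x, is_pure E -> ~ step (plugE E (Shift t)) x.
Proof.
  intros E t x HE Hs. destruct (step_contract _ _ Hs) as [F [r [r' [HF [Hr [Heq _]]]]]].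
  eapply pure_shift_not_plug_contract; eauto.
Qed.

Lemma stuck_pure_shift : forall E t, is_pure E -> stuck (plugE E (Shift t)).
Proof.
  intros; split; [apply pure_shift_not_value|intros x; apply pure_shift_irreducible; auto].
Qed.

Lemma stuck_steps_not_value : forall a b, stuck a -> steps a b -> ~ is_value b.
Proof. intros a b [Hnv Hns] Hs. destruct Hs; auto. exfalso; eapply Hns; eauto. Qed.

Lemma steps_trans : forall a b c, steps a b -> steps b c -> steps a c.
Proof. intros a b c H; induction H; intros; auto. econstructor; eauto. Qed.

Lemma step_steps : forall a b, step a b -> steps a b.
Proof. intros; econstructor; eauto; constructor. Qed.

Lemma steps_to_irreducible : forall s a n, steps s a -> steps s n ->
  (forall x, ~ step n x) -> steps a n.
Proof.
  intros s a n H; revert n; induction H as [|s s' a Hs Hs' IH]; intros n Hn Hirr; auto.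
  destruct Hn as [|s s'' n Hs2 Hn].
  - exfalso; eapply Hirr; eauto.
  - rewrite (step_deterministic _ _ _ Hs Hs2) in IH. auto.
Qed.

Lemma step_plugE : forall F a b, is_eval F -> step a b -> step (plugE F a) (plugE F b).
Proof.
  intros F a b HF H. destruct (step_contract _ _ H) as [G [r [r' [HG [Hr [-> ->]]]]]].
  rewrite <- !plugE_comp. apply contract_step; auto. apply is_eval_comp; auto.
Qed.

Lemma steps_plugE : forall F a b, is_eval F -> steps a b -> steps (plugE F a) (plugE F b).
Proof. intros F a b HF H; induction H; econstructor; eauto using step_plugE. Qed.

Lemma step_closed : forall s s', closed s -> step s s' -> closed s'.
Proof.
  intros s s' Hc H. destruct (step_contract _ _ H) as [F [r [r' [_ [Hr [-> ->]]]]]].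
  apply closed_plugE_inv in Hc as [HF Hrc]. apply wf_plugE; split; auto.
  destruct Hr; simpl in *.
  - destruct Hrc; apply closed_subst0; auto.
  - apply wf_plugE in Hrc as [HE Ht]. apply closed_subst0; auto.
    unfold closed; simpl. rewrite (liftE_wfE E 0) by (auto; lia).
    apply wf_plugE; split; [eapply wfE_weaken; eauto|simpl; lia].
  - auto.
Qed.

Lemma reset_shift_step : forall A B s, is_pure A -> is_pure B ->
  step (Reset (plugE A (plugE B (Shift s)))) (Reset (subst0 s (kont A B))).
Proof.
  intros A B s HA HB. rewrite <- plugE_comp. unfold kont.
  rewrite <- plugE_comp, <- liftE_comp.
  apply (contract_step EHole); simpl; auto. constructor. apply is_pure_comp; auto.
Qed.

Lemma steps_reset_contract : forall a a' r, steps a a' -> contract (Reset a') r ->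
  steps (Reset a) r.
Proof.
  intros a a' r Hs Hr. eapply steps_trans; [apply (steps_plugE (EReset EHole)); simpl; eauto|].
  apply step_steps, (contract_step EHole _ _ I Hr).
Qed.

Lemma steps_closed : forall s s', closed s -> steps s s' -> closed s'.
Proof. intros s s' Hc H; induction H; eauto using step_closed. Qed.

Lemma value_or_step_or_stuck : forall u, is_value u \/ (exists u', step u u') \/ stuck u.
Proof.
  intros u. destruct (classic (is_value u)); auto.
  destruct (classic (exists u', step u u')); auto.
  right; right. split; auto. intros t' Hs; eauto.
Qed.

Lemma stuck_pure_shift_inv : forall t, closed t -> stuck t ->
  exists E s, is_pure E /\ t = plugE E (Shift s).
Proof.
  unfold closed. induction t; intros Hc [Hnv Hns]; simpl in *.
  - lia.
  - contradiction.
  - destruct Hc as [H1 H2].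
    destruct (value_or_step_or_stuck t1) as [Hv|[[u' Hs]|Hst]].
    + destruct (value_or_step_or_stuck t2) as [Hv2|[[u' Hs]|Hst]].
      * destruct t1; simpl in Hv; try contradiction. exfalso; eapply Hns.
        apply (contract_step EHole); simpl; auto. constructor; auto.
      * exfalso; eapply Hns. apply (step_plugE (EAppR t1 EHole)); simpl; eauto.
      * destruct (IHt2 H2 Hst) as [E [s [HE ->]]]. exists (EAppR t1 E), s; simpl; auto.
    + exfalso; eapply Hns. apply (step_plugE (EAppL EHole t2)); simpl; eauto.
    + destruct (IHt1 H1 Hst) as [E [s [HE ->]]]. exists (EAppL E t2), s; simpl; auto.
  - exists EHole, t; simpl; auto.
  - exfalso. destruct (value_or_step_or_stuck t) as [Hv|[[u' Hs]|Hst]].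
    + eapply Hns. apply (contract_step EHole); simpl; auto. constructor; auto.
    + eapply Hns. apply (step_plugE (EReset EHole)); simpl; eauto.
    + destruct (IHt Hc Hst) as [E [s [HE ->]]]. eapply Hns.
      apply (contract_step EHole); simpl; auto. constructor; auto.
Qed.

(** * Similarity *)

Definition cval (v : term) : Prop := closed v /\ is_value v.

Definition sim_values (R : rel) (s0 s1 : term) : Prop :=
  forall b0, steps s0 (Lam b0) -> exists b1, steps s1 (Lam b1) /\
    forall v, cval v -> R (subst0 b0 v) (subst0 b1 v).

Definition sim_stuck (R : rel) (s0 s1 : term) : Prop :=
  forall E0 t0, is_pure E0 -> steps s0 (plugE E0 (Shift t0)) ->
    exists E1 t1, is_pure E1 /\ steps s1 (plugE E1 (Shift t1)) /\
      forall G, is_pure G -> wfE 0 G ->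
        R (Reset (subst0 t0 (kont G E0))) (Reset (subst0 t1 (kont G E1))).

(* A diverging left-hand side is related to anything. *)
CoInductive sim : rel :=
| sim_intro : forall s0 s1, sim_values sim s0 s1 -> sim_stuck sim s0 s1 -> sim s0 s1.

Lemma sim_coind : forall R : rel,
  (forall s0 s1, R s0 s1 -> sim_values R s0 s1 /\ sim_stuck R s0 s1) ->
  forall s0 s1, R s0 s1 -> sim s0 s1.
Proof.
  intros R HR. cofix CIH. intros s0 s1 H. destruct (HR _ _ H) as [HV HS]. constructor.
  - intros b0 Hs. destruct (HV b0 Hs) as [b1 [Hs1 Hb]].
    exists b1; split; [exact Hs1|intros v Hv; apply CIH, Hb, Hv].
  - intros E0 t0 HE Hs. destruct (HS E0 t0 HE Hs) as [E1 [t1 [HE1 [Hs1 HG]]]].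
    exists E1, t1; split; [exact HE1|split; [exact Hs1|]].
    intros G HG1 HG2; apply CIH, HG; assumption.
Qed.

Lemma sim_inv : forall s0 s1, sim s0 s1 -> sim_values sim s0 s1 /\ sim_stuck sim s0 s1.
Proof. intros s0 s1 H; destruct H; auto. Qed.

Lemma sim_refl : forall t, sim t t.
Proof.
  intros t. apply (sim_coind eq); auto. intros s0 s1 <-. split.
  - intros b0 H. eauto.
  - intros E0 t0 HE H. exists E0, t0; repeat split; auto.
Qed.

Lemma sim_trans : forall a b c, sim a b -> sim b c -> sim a c.
Proof.
  intros a b c H1 H2. apply (sim_coind (fun a c => exists b, sim a b /\ sim b c)); eauto.
  clear. intros a c [b [H1 H2]].
  apply sim_inv in H1 as [V1 S1]; apply sim_inv in H2 as [V2 S2]. split.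
  - intros b0 Hs. destruct (V1 b0 Hs) as [b1 [Hs1 Hb1]].
    destruct (V2 b1 Hs1) as [b2 [Hs2 Hb2]]. exists b2; split; [exact Hs2|eauto].
  - intros E0 t0 HE Hs. destruct (S1 E0 t0 HE Hs) as [E1 [t1 [HE1 [Hs1 HG1]]]].
    destruct (S2 E1 t1 HE1 Hs1) as [E2 [t2 [HE2 [Hs2 HG2]]]].
    exists E2, t2; repeat split; eauto.
Qed.

Lemma sim_steps_l : forall a a' b, sim a b -> steps a a' -> sim a' b.
Proof.
  intros a a' b H Hs. apply sim_inv in H as [V S]. constructor.
  - intros b0 H. apply V. eapply steps_trans; eauto.
  - intros E0 t0 HE H. apply S; auto. eapply steps_trans; eauto.
Qed.

Lemma sim_steps_r : forall a b b', sim a b -> steps b b' -> sim a b'.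
Proof.
  intros a b b' H Hs. apply sim_inv in H as [V S]. constructor.
  - intros b0 H. destruct (V b0 H) as [b1 [Hs1 Hb]]. exists b1; split; auto.
    eapply steps_to_irreducible; eauto. intros x; apply value_irreducible; simpl; auto.
  - intros E0 t0 HE H. destruct (S E0 t0 HE H) as [E1 [t1 [HE1 [Hs1 HG]]]].
    exists E1, t1; split; [exact HE1|split; [|exact HG]].
    eapply steps_to_irreducible; eauto. intros x; apply pure_shift_irreducible; auto.
Qed.

(** * Howe's closure of open similarity *)

Definition open_sim (k : nat) (t u : term) : Prop :=
  wf k t /\ wf k u /\
  forall vs, k <= length vs -> Forall cval vs -> sim (msubst vs t) (msubst vs u).

Lemma open_sim_wf : forall k t u, open_sim k t u -> wf k t /\ wf k u.
Proof. intros k t u [? [? _]]; auto. Qed.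

Lemma open_sim_refl : forall k t, wf k t -> open_sim k t t.
Proof. intros; split; [|split]; auto. intros; apply sim_refl. Qed.

Lemma open_sim_trans : forall k a b c, open_sim k a b -> open_sim k b c -> open_sim k a c.
Proof.
  intros k a b c [Ha [_ H1]] [_ [Hc H2]]. split; [|split]; auto.
  intros; eapply sim_trans; eauto.
Qed.

Lemma open_sim_weaken : forall k t u, open_sim k t u -> open_sim (S k) t u.
Proof.
  intros k t u [Ht [Hu H]].
  split; [|split]; try (eapply wf_weaken; eauto); intros; apply H; auto; lia.
Qed.

Lemma open_sim0_sim : forall t u, open_sim 0 t u -> sim t u.
Proof. intros t u [_ [_ H]]. apply (H nil); simpl; auto. Qed.

Lemma open_sim0_steps_l : forall r m b, open_sim 0 r b -> steps r m -> open_sim 0 m b.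
Proof.
  intros r m b Ho Hs. destruct (open_sim_wf _ _ _ Ho) as [Hr Hb].
  split; [exact (steps_closed _ _ Hr Hs)|split; [exact Hb|]].
  intros vs _ _. rewrite !msubst_closed by (auto; exact (steps_closed _ _ Hr Hs)).
  eapply sim_steps_l; eauto using open_sim0_sim.
Qed.

Lemma sim_open_sim : forall k t u, closed t -> closed u -> sim t u -> open_sim k t u.
Proof.
  intros k t u Ht Hu H. split; [|split]; try (eapply wf_weaken; eauto; lia).
  intros. rewrite !msubst_closed; auto.
Qed.

Lemma open_sim_subst : forall k t u j v, open_sim (S k) t u -> cval v -> j <= k ->
  open_sim k (subst j v t) (subst j v u).
Proof.
  intros k t u j v [Ht [Hu H]] [Hcv Hvv] Hj. split; [|split]; try (apply wf_subst; auto).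
  intros vs Hl Hvs.
  assert (Hcl : Forall closed vs) by (eapply Forall_impl; [|exact Hvs]; intros ? []; auto).
  rewrite !msubst_subst by (auto; lia).
  apply H; [rewrite length_insert_at; lia|apply Forall_insert_at; [exact Hvs|split; auto]].
Qed.

Inductive howe : nat -> term -> term -> Prop :=
| howe_var : forall k n u, open_sim k (Var n) u -> howe k (Var n) u
| howe_lam : forall k a a' u, howe (S k) a a' -> open_sim k (Lam a') u -> howe k (Lam a) u
| howe_app : forall k a a' c c' u, howe k a a' -> howe k c c' ->
    open_sim k (App a' c') u -> howe k (App a c) u
| howe_shift : forall k a a' u, howe (S k) a a' -> open_sim k (Shift a') u ->
    howe k (Shift a) u
| howe_reset : forall k a a' u, howe k a a' -> open_sim k (Reset a') u ->
    howe k (Reset a) u.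

Lemma howe_wf : forall k t u, howe k t u -> wf k t /\ wf k u.
Proof.
  intros k t u H; induction H; simpl;
    repeat match goal with Ho : open_sim _ _ _ |- _ => apply open_sim_wf in Ho end;
    intuition.
Qed.

Lemma howe_open_sim : forall k t u w, howe k t u -> open_sim k u w -> howe k t w.
Proof. intros k t u w H Ho; destruct H; econstructor; eauto using open_sim_trans. Qed.

Lemma howe_refl : forall t k, wf k t -> howe k t t.
Proof.
  induction t; simpl; intros k Hw; try destruct Hw;
    econstructor; eauto; apply open_sim_refl; simpl; auto.
Qed.

Lemma open_sim_howe : forall k t u, open_sim k t u -> howe k t u.
Proof.
  intros k t u Ho. pose proof (proj1 (open_sim_wf _ _ _ Ho)) as Hw.
  destruct t; simpl in Hw; try destruct Hw; econstructor; eauto using howe_refl.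
Qed.

Lemma howe_weaken : forall k t u, howe k t u -> howe (S k) t u.
Proof. intros k t u H; induction H; econstructor; eauto using open_sim_weaken. Qed.

Lemma howe_closed_weaken : forall k t u, howe 0 t u -> howe k t u.
Proof. induction k; auto using howe_weaken. Qed.

Lemma howe_lam_compat : forall k a a', howe (S k) a a' -> howe k (Lam a) (Lam a').
Proof.
  intros k a a' H. econstructor; eauto. apply open_sim_refl, (howe_wf _ _ _ H).
Qed.

Lemma howe_app_compat : forall k a a' c c', howe k a a' -> howe k c c' ->
  howe k (App a c) (App a' c').
Proof.
  intros k a a' c c' Ha Hc. econstructor; eauto. apply open_sim_refl; simpl.
  split; [apply (howe_wf _ _ _ Ha)|apply (howe_wf _ _ _ Hc)].
Qed.

Lemma howe_shift_compat : forall k a a', howe (S k) a a' -> howe k (Shift a) (Shift a').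
Proof.
  intros k a a' H. econstructor; eauto. apply open_sim_refl, (howe_wf _ _ _ H).
Qed.

Lemma howe_reset_compat : forall k a a', howe k a a' -> howe k (Reset a) (Reset a').
Proof.
  intros k a a' H. econstructor; eauto. apply open_sim_refl, (howe_wf _ _ _ H).
Qed.

Lemma howe_subst : forall m t t', howe m t t' ->
  forall k j v v', m = S k -> j <= k -> howe 0 v v' -> cval v -> cval v' ->
  howe k (subst j v t) (subst j v' t').
Proof.
  intros m t t' H; induction H as [k n u Ho|k a a' u H IH Ho|k a a' c c' u H1 IH1 H2 IH2 Ho
    |k a a' u H IH Ho|k a a' u H IH Ho];
    intros k' j v v' -> Hj Hv Hcv Hcv';
    pose proof (open_sim_subst _ _ _ j v' Ho Hcv' Hj) as Ho'; simpl in *;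
    rewrite ?(lift_closed v), ?(lift_closed v') in * by apply Hcv || apply Hcv'.
  - destruct (Nat.eqb_spec n j).
    + eapply howe_open_sim; [apply howe_closed_weaken; eauto|exact Ho'].
    + destruct (n <? j); constructor; auto.
  - apply howe_lam with (subst (S j) v' a'); [apply (IH (S k')); auto; lia|exact Ho'].
  - apply howe_app with (subst j v' a') (subst j v' c'); [apply IH1|apply IH2|exact Ho'];
      auto.
  - apply howe_shift with (subst (S j) v' a'); [apply (IH (S k')); auto; lia|exact Ho'].
  - apply howe_reset with (subst j v' a'); [apply IH; auto|exact Ho'].
Qed.

Lemma howe_subst0 : forall t t' v v', howe 1 t t' -> howe 0 v v' -> cval v -> cval v' ->
  howe 0 (subst0 t v) (subst0 t' v').
Proof. intros. eapply howe_subst; eauto. Qed.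

Lemma howe_lam_inv : forall k a u, howe k (Lam a) u ->
  exists a', howe (S k) a a' /\ open_sim k (Lam a') u.
Proof. intros k a u H; inversion H; subst; eauto. Qed.

Lemma howe_app_inv : forall k a c u, howe k (App a c) u ->
  exists a' c', howe k a a' /\ howe k c c' /\ open_sim k (App a' c') u.
Proof. intros k a c u H; inversion H; subst; eauto 6. Qed.

Lemma howe_shift_inv : forall k a u, howe k (Shift a) u ->
  exists a', howe (S k) a a' /\ open_sim k (Shift a') u.
Proof. intros k a u H; inversion H; subst; eauto. Qed.

Lemma howe_reset_inv : forall k a u, howe k (Reset a) u ->
  exists a', howe k a a' /\ open_sim k (Reset a') u.
Proof. intros k a u H; inversion H; subst; eauto. Qed.

Lemma howe_steps_r : forall s m r b, howe 0 s m -> steps r m -> open_sim 0 r b ->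
  howe 0 s b.
Proof. intros; eapply howe_open_sim; eauto using open_sim0_steps_l. Qed.

Lemma howe_lam_l_inv : forall p u, howe 0 (Lam p) u ->
  exists p1 q, howe 1 p p1 /\ steps u (Lam q) /\ howe 0 (Lam p) (Lam q) /\
    forall v, cval v -> sim (subst0 p1 v) (subst0 q v).
Proof.
  intros p u H. destruct (howe_lam_inv _ _ _ H) as [p1 [Hp Ho]].
  destruct (open_sim_wf _ _ _ Ho) as [Hp1 Hu]. apply open_sim0_sim in Ho.
  destruct (proj1 (sim_inv _ _ Ho) p1 (steps_refl _)) as [q [Hq Hsim]].
  exists p1, q; split; [exact Hp|split; [exact Hq|split; [|exact Hsim]]].
  econstructor; eauto. apply sim_open_sim; auto.
  - exact (steps_closed _ _ Hu Hq).
  - eapply sim_steps_r; eauto.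
Qed.

Inductive howe_pure : ectx -> ectx -> Prop :=
| howe_pure_hole : howe_pure EHole EHole
| howe_pure_appR : forall v v' G G', is_value v -> is_value v' -> howe 0 v v' ->
    howe_pure G G' -> howe_pure (EAppR v G) (EAppR v' G')
| howe_pure_appL : forall G G' u u', howe_pure G G' -> howe 0 u u' ->
    howe_pure (EAppL G u) (EAppL G' u').

Lemma howe_pure_wf : forall G G', howe_pure G G' ->
  is_pure G /\ is_pure G' /\ wfE 0 G /\ wfE 0 G'.
Proof.
  intros G G' H; induction H; simpl; auto;
    match goal with Hx : howe 0 _ _ |- _ => apply howe_wf in Hx end; intuition.
Qed.

Lemma howe_pure_refl : forall G, is_pure G -> wfE 0 G -> howe_pure G G.
Proof. induction G; simpl; intros; intuition; constructor; auto using howe_refl. Qed.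

Lemma howe_pure_comp : forall A A' B B', howe_pure A A' -> howe_pure B B' ->
  howe_pure (compE A B) (compE A' B').
Proof. intros A A' B B' Ha Hb; induction Ha; simpl; auto; constructor; auto. Qed.

Lemma howe_pure_plugE : forall G G' k a a', howe_pure G G' -> howe k a a' ->
  howe k (plugE G a) (plugE G' a').
Proof.
  intros G G' k a a' HG Ha; induction HG; simpl; auto;
    apply howe_app_compat; auto using howe_closed_weaken.
Qed.

Lemma kont_cval : forall G E, wfE 0 G -> wfE 0 E -> cval (kont G E).
Proof. intros; split; [apply kont_closed; auto|simpl; auto]. Qed.

Lemma howe_kont : forall G G' E E', howe_pure G G' -> howe_pure E E' ->
  howe 0 (kont G E) (kont G' E').
Proof.
  intros G G' E E' HG HE.
  destruct (howe_pure_wf _ _ HG) as [_ [_ [? ?]]], (howe_pure_wf _ _ HE) as [_ [_ [? ?]]].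
  unfold kont. rewrite !(liftE_wfE _ 0 0) by (auto; lia).
  apply howe_lam_compat, howe_reset_compat, howe_pure_plugE, howe_pure_plugE; auto.
  apply howe_refl; simpl; lia.
Qed.

(** * Howe's closure is preserved by reduction *)

(* What [howe 0 (plugE E (Shift t)) b] yields, in a form that propagates
   through evaluation frames (lemma [howe_stuck_frame]). *)
Definition howe_stuck (E : ectx) (t b : term) : Prop :=
  exists E1 t1, is_pure E1 /\ steps b (plugE E1 (Shift t1)) /\
    forall G G', howe_pure G G' ->
      howe 0 (Reset (subst0 t (kont G E))) (Reset (subst0 t1 (kont G' E1))).

Lemma howe_stuck_frame : forall A A' E t c b, howe_pure A A' ->
  howe_stuck E t c -> open_sim 0 (plugE A' c) b -> howe_stuck (compE A E) t b.
Proof.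
  intros A A' E t c b HA [E2 [t2 [HE2 [Hs2 HG2]]]] Ho.
  destruct (howe_pure_wf _ _ HA) as [_ [HpA' [_ HwA']]].
  destruct (open_sim_wf _ _ _ Ho) as [Hc Hb]. apply closed_plugE_inv in Hc as [_ Hc].
  destruct (closed_plugE_inv _ _ (steps_closed _ _ Hc Hs2)) as [HwE2 Hwt2].
  assert (Hst : steps (plugE A' c) (plugE (compE A' E2) (Shift t2))).
  { rewrite plugE_comp. apply steps_plugE; auto using is_pure_is_eval. }
  apply open_sim0_sim in Ho. eapply sim_steps_l in Ho; [|exact Hst].
  destruct (proj2 (sim_inv _ _ Ho) _ t2 (is_pure_comp _ _ HpA' HE2) (steps_refl _))
    as [E3 [t3 [HE3 [Hs3 HG3]]]].
  destruct (closed_plugE_inv _ _ (steps_closed _ _ Hb Hs3)) as [HwE3 Hwt3].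
  exists E3, t3; split; [exact HE3|split; [exact Hs3|]].
  intros G G' HG. destruct (howe_pure_wf _ _ HG) as [_ [HpG' [_ HwG']]].
  rewrite kont_comp. eapply howe_open_sim.
  - apply HG2, howe_pure_comp; eauto.
  - rewrite <- kont_comp. apply sim_open_sim; auto using closed_reset_kont.
    apply closed_reset_kont; auto. apply wfE_comp; auto.
Qed.

Lemma howe_pure_shift : forall E t b, is_pure E ->
  howe 0 (plugE E (Shift t)) b -> howe_stuck E t b.
Proof.
  induction E as [|v E IHE|E IHE u|E IHE]; intros s b HE H; simpl in *.
  - destruct (howe_shift_inv _ _ _ H) as [s' [Hs Ho]].
    destruct (open_sim_wf _ _ _ Ho) as [Hws' Hb]. apply open_sim0_sim in Ho.
    destruct (proj2 (sim_inv _ _ Ho) EHole s' I (steps_refl _))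
      as [E1 [t1 [HE1 [Hs1 HG]]]].
    destruct (closed_plugE_inv _ _ (steps_closed _ _ Hb Hs1)) as [HwE1 Hwt1].
    exists E1, t1; split; [exact HE1|split; [exact Hs1|]].
    intros G G' HGG. destruct (howe_pure_wf _ _ HGG) as [_ [HpG' [HwG HwG']]].
    apply (howe_open_sim _ _ (Reset (subst0 s' (kont G' EHole)))).
    + apply howe_reset_compat, howe_subst0; auto using howe_kont, howe_pure_hole;
        apply kont_cval; simpl; auto.
    + apply sim_open_sim; auto using closed_reset_kont.
  - destruct HE as [Hv HE]. destruct (howe_app_inv _ _ _ _ H) as [a' [c' [Hva [Hc Ho]]]].
    destruct v as [|p| | |]; try contradiction.
    destruct (howe_lam_l_inv _ _ Hva) as [_ [q [_ [Hsq [Hpq _]]]]].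
    apply (howe_stuck_frame (EAppR (Lam p) EHole) (EAppR (Lam q) EHole) E s c');
      [repeat constructor; auto|apply IHE; auto|].
    eapply open_sim0_steps_l; [exact Ho|].
    apply (steps_plugE (EAppL EHole c')); simpl; auto.
  - destruct (howe_app_inv _ _ _ _ H) as [a' [c' [Ha [Hc Ho]]]].
    apply (howe_stuck_frame (EAppL EHole u) (EAppL EHole c') E s a');
      [repeat constructor; auto|apply IHE; auto|exact Ho].
  - contradiction.
Qed.

Lemma howe_beta : forall t v b, is_value v -> howe 0 (App (Lam t) v) b ->
  howe 0 (subst0 t v) b.
Proof.
  intros t v b Hv H. destruct (howe_app_inv _ _ _ _ H) as [x' [y' [Hx [Hy Ho]]]].
  destruct v as [|r| | |]; try contradiction.
  destruct (howe_lam_l_inv _ _ Hx) as [p1 [q [Hp [Hsq [Hpq Hq]]]]].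
  destruct (howe_lam_l_inv _ _ Hy) as [_ [w [_ [Hsw [Hrw _]]]]].
  destruct (howe_wf _ _ _ Hpq) as [_ Hcq], (howe_wf _ _ _ Hrw) as [_ Hcw].
  apply (howe_open_sim _ _ (subst0 q (Lam w))).
  - apply (howe_open_sim _ _ (subst0 p1 (Lam w))).
    + apply howe_subst0; auto; split; simpl; auto. apply (howe_wf _ _ _ Hrw).
    + apply sim_open_sim; [apply closed_subst0|apply closed_subst0|apply Hq; split];
        simpl; auto. apply (howe_wf _ _ _ Hp).
  - apply (open_sim0_steps_l _ _ _ Ho).
    eapply steps_trans; [apply (steps_plugE (EAppL EHole y')); simpl; eauto|].
    eapply steps_trans; [apply (steps_plugE (EAppR (Lam q) EHole)); simpl; eauto|].
    apply step_steps, (contract_step EHole); simpl; auto. constructor; simpl; auto.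
Qed.

Lemma howe_reset_value : forall v b, is_value v -> howe 0 (Reset v) b -> howe 0 v b.
Proof.
  intros v b Hv H. destruct (howe_reset_inv _ _ _ H) as [x' [Hx Ho]].
  destruct v as [|p| | |]; try contradiction.
  destruct (howe_lam_l_inv _ _ Hx) as [_ [q [_ [Hsq [Hpq _]]]]].
  apply (howe_steps_r _ _ (Reset x') _ Hpq); [|exact Ho].
  apply (steps_reset_contract _ _ _ Hsq). constructor; simpl; auto.
Qed.

Lemma howe_reset_shift : forall E t b, is_pure E -> howe 0 (Reset (plugE E (Shift t))) b ->
  howe 0 (Reset (subst0 t (Lam (Reset (plugE (liftE 0 E) (Var 0)))))) b.
Proof.
  intros E t b HE H. destruct (howe_reset_inv _ _ _ H) as [x' [Hx Ho]].
  destruct (howe_pure_shift E t x' HE Hx) as [E1 [t1 [HE1 [Hs1 HG]]]].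
  apply (howe_steps_r _ _ (Reset x') _ (HG EHole EHole howe_pure_hole)); [|exact Ho].
  apply (steps_reset_contract _ _ _ Hs1). constructor; auto.
Qed.

Lemma howe_contract_l : forall r r' b, contract r r' -> howe 0 r b -> howe 0 r' b.
Proof.
  intros r r' b Hr; destruct Hr;
    eauto using howe_beta, howe_reset_value, howe_reset_shift.
Qed.

Lemma howe_plugE_l : forall F r r', is_eval F -> (forall b, howe 0 r b -> howe 0 r' b) ->
  forall b, howe 0 (plugE F r) b -> howe 0 (plugE F r') b.
Proof.
  induction F; intros r r' HF Hr b H; simpl in *; auto.
  - destruct (howe_app_inv _ _ _ _ H) as [a' [c' [Ha [Hc Ho]]]].
    econstructor; [exact Ha| |exact Ho]. eapply IHF; intuition eauto.
  - destruct (howe_app_inv _ _ _ _ H) as [a' [c' [Ha [Hc Ho]]]].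
    econstructor; [|exact Hc|exact Ho]. eapply IHF; eauto.
  - destruct (howe_reset_inv _ _ _ H) as [a' [Ha Ho]].
    econstructor; [|exact Ho]. eapply IHF; eauto.
Qed.

Lemma howe_steps_l : forall s s' b, steps s s' -> howe 0 s b -> howe 0 s' b.
Proof.
  intros s s' b Hs; induction Hs as [|s m s' Hst _ IH]; auto.
  intros H; apply IH.
  destruct (step_contract _ _ Hst) as [F [r [r' [HF [Hr [-> ->]]]]]].
  apply (howe_plugE_l F r r'); auto. intros; eapply howe_contract_l; eauto.
Qed.

Lemma howe_sim : forall s b, howe 0 s b -> sim s b.
Proof.
  apply (sim_coind (howe 0)). intros s b H. split.
  - intros b0 Hs. pose proof (howe_steps_l _ _ _ Hs H) as Hl.
    destruct (howe_lam_l_inv _ _ Hl) as [p1 [q [Hp [Hsq [Hpq Hq]]]]].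
    exists q; split; auto. intros v [Hcv Hv].
    destruct (howe_wf _ _ _ Hp) as [Hwb0 Hwp1], (howe_wf _ _ _ Hpq) as [_ Hwq].
    apply (howe_open_sim _ _ (subst0 p1 v)).
    + apply howe_subst0; auto using howe_refl; split; auto.
    + apply sim_open_sim; try apply closed_subst0; auto. apply Hq; split; auto.
  - intros E0 t0 HE Hs.
    destruct (howe_pure_shift _ _ _ HE (howe_steps_l _ _ _ Hs H))
      as [E1 [t1 [HE1 [Hs1 HG]]]].
    exists E1, t1; split; [exact HE1|split; [exact Hs1|]].
    intros G HG1 HG2. apply HG, howe_pure_refl; auto.
Qed.

Lemma tildeI_howe : forall R : rel, (forall a b, R a b -> closed a /\ closed b /\ sim a b) ->
  forall a b, tildeI R a b -> forall k, wf k a -> wf k b -> howe k a b.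
Proof.
  intros R HR a b H; induction H as [a b Hab| | | | |]; intros k Ha Hb; simpl in *.
  - destruct (HR a b Hab) as [? [? ?]]. apply open_sim_howe, sim_open_sim; auto.
  - apply howe_refl; simpl; auto.
  - apply howe_lam_compat; auto.
  - destruct Ha, Hb. apply howe_app_compat; auto.
  - apply howe_shift_compat; auto.
  - apply howe_reset_compat; auto.
Qed.

Lemma tildeI_sim : forall R : rel, (forall a b, R a b -> closed a /\ closed b /\ sim a b) ->
  forall a b, tildeI R a b -> closed a -> closed b -> sim a b.
Proof. intros. apply howe_sim. eapply tildeI_howe; eauto. Qed.

Definition simeq (a b : term) : Prop := sim a b /\ sim b a.

Lemma tildeI_refl : forall R t, tildeI R t t.
Proof.
  induction t; [apply ti_var|apply ti_lam|apply ti_app|apply ti_shift|apply ti_reset]; auto.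
Qed.

Lemma tildeI_flip : forall (R : rel) a b, tildeI R a b -> tildeI (fun x y => R y x) b a.
Proof.
  intros R a b H; induction H;
    [apply ti_base|apply ti_var|apply ti_lam|apply ti_app|apply ti_shift|apply ti_reset]; auto.
Qed.

Lemma tildeI_plugC : forall R C a b, tildeI R a b -> tildeI R (plugC C a) (plugC C b).
Proof.
  induction C; simpl; intros; auto;
    [apply ti_lam|apply ti_app|apply ti_app|apply ti_shift|apply ti_reset]; auto using tildeI_refl.
Qed.

Lemma tildeI_simeq : forall R : rel, (forall a b, R a b -> closed a /\ closed b /\ simeq a b) ->
  forall a b, tildeI R a b -> closed a -> closed b -> simeq a b.
Proof.
  intros R HR a b H Ha Hb. split.
  - apply (tildeI_sim R); auto. intros x y Hxy. destruct (HR x y Hxy) as [? [? [? ?]]]; auto.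
  - apply (tildeI_sim (fun x y => R y x)); auto using tildeI_flip.
    intros x y Hxy. destruct (HR y x Hxy) as [? [? [? ?]]]; auto.
Qed.

Lemma hat_refl : forall R G, is_pure G -> wfE 0 G -> hat R G G.
Proof.
  induction G; simpl; intros; intuition; constructor; auto;
    repeat split; auto using tildeI_refl.
Qed.

Lemma hat_plugE_tildeI : forall R F0 F1 a b, hat R F0 F1 -> tildeI R a b ->
  tildeI R (plugE F0 a) (plugE F1 b).
Proof.
  intros R F0 F1 a b H Hab; induction H; simpl; auto;
    repeat match goal with Hx : tilde _ _ _ |- _ => destruct Hx as [? [? ?]] end;
    [apply ti_app|apply ti_app|apply ti_reset]; auto.
Qed.

Lemma hat_wf : forall R F0 F1, hat R F0 F1 -> wfE 0 F0 /\ wfE 0 F1.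
Proof.
  intros R F0 F1 H; induction H; simpl;
    repeat match goal with Hx : tilde _ _ _ |- _ => destruct Hx as [_ [? ?]] end;
    intuition.
Qed.

(** * Environmental bisimilarity and similarity *)

Section EnvBisim.

Variable X : envrel.
Hypothesis HX : env_bisim X.

Lemma env_bisim_steps_l : forall E s0 s1 r, trip X E s0 s1 -> steps s0 r ->
  exists r1, steps s1 r1 /\ trip X E r r1.
Proof.
  intros E s0 s1 r Ht Hs; revert s1 Ht; induction Hs as [|x y z Hxy _ IH]; intros s1 Ht.
  - exists s1; split; auto. constructor.
  - destruct HX as [_ [Htrip _]]. destruct (Htrip _ _ _ Ht) as [Hstep _].
    destruct (Hstep _ Hxy) as [m [Hm Htm]]. destruct (IH _ Htm) as [r1 [Hr1 Htr]].
    exists r1; split; auto. eapply steps_trans; eauto.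
Qed.

Lemma env_bisim_steps_r : forall E s0 s1 r, trip X E s0 s1 -> steps s1 r ->
  exists r0, steps s0 r0 /\ trip X E r0 r.
Proof.
  intros E s0 s1 r Ht Hs; revert s0 Ht; induction Hs as [|x y z Hxy _ IH]; intros s0 Ht.
  - exists s0; split; auto. constructor.
  - destruct HX as [_ [Htrip _]]. destruct (Htrip _ _ _ Ht) as [_ [_ [_ [Hstep _]]]].
    destruct (Hstep _ Hxy) as [m [Hm Htm]]. destruct (IH _ Htm) as [r0 [Hr0 Htr]].
    exists r0; split; auto. eapply steps_trans; eauto.
Qed.

Lemma env_bisim_lam : forall E b0 b1 v, envs X E -> E (Lam b0) (Lam b1) -> cval v ->
  trip X E (subst0 b0 v) (subst0 b1 v).
Proof.
  intros E b0 b1 v HE Hb [Hcv Hv]. destruct HX as [_ [_ Henv]].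
  apply (proj1 (Henv E HE)); auto. split; [apply tildeI_refl|auto].
Qed.

Lemma env_bisim_pure_shift : forall E E0 E1 t0 t1 G, envs X E ->
  is_pure E0 -> is_pure E1 -> E (plugE E0 (Shift t0)) (plugE E1 (Shift t1)) ->
  is_pure G -> wfE 0 G ->
  trip X E (Reset (subst0 t0 (kont G E0))) (Reset (subst0 t1 (kont G E1))).
Proof.
  intros E E0 E1 t0 t1 G HE HE0 HE1 Ht HG HwG. destruct HX as [_ [_ Henv]].
  apply (proj2 (Henv E HE)); auto using hat_refl.
Qed.

Lemma env_closed_r : forall E a b, envs X E -> E a b -> closed b.
Proof. intros E a b HE Hab. destruct HX as [[Henv _] _]. apply (Henv E HE a b Hab). Qed.

Lemma env_closed_l : forall E a b, envs X E -> E a b -> closed a.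
Proof. intros E a b HE Hab. destruct HX as [[Henv _] _]. apply (Henv E HE a b Hab). Qed.

Lemma env_bisim_sim : forall E s0 s1, trip X E s0 s1 -> sim s0 s1.
Proof.
  intros E s0 s1 Ht. apply (sim_coind (fun s0 s1 => exists E, trip X E s0 s1)); eauto.
  intros a0 a1 [E' Ht']. pose proof HX as [_ [Htrip _]]. split.
  - intros b0 Hs. destruct (env_bisim_steps_l _ _ _ _ Ht' Hs) as [r1 [Hr1 Htr]].
    destruct (proj1 (proj2 (Htrip _ _ _ Htr)) I) as [v1 [Hv1 [Hvv HE]]].
    destruct v1 as [|b1| | |]; try contradiction.
    exists b1; split; [eapply steps_trans; eauto|].
    intros v Hv. exists (add_pair E' (Lam b0) (Lam b1)).
    apply env_bisim_lam; auto. right; auto.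
  - intros E0 t0 HE0 Hs. destruct (env_bisim_steps_l _ _ _ _ Ht' Hs) as [r1 [Hr1 Htr]].
    destruct (proj1 (proj2 (proj2 (Htrip _ _ _ Htr))) (stuck_pure_shift _ _ HE0))
      as [t1' [Ht1' [Hst HE]]].
    assert (Hc : closed t1') by (eapply env_closed_r; [exact HE|right; auto]).
    destruct (stuck_pure_shift_inv _ Hc Hst) as [E1 [t1 [HE1 ->]]].
    exists E1, t1; split; [exact HE1|split; [eapply steps_trans; eauto|]].
    intros G HG HwG. exists (add_pair E' (plugE E0 (Shift t0)) (plugE E1 (Shift t1))).
    apply env_bisim_pure_shift; auto. right; auto.
Qed.

Lemma env_bisim_sim_sym : forall E s0 s1, trip X E s0 s1 -> sim s1 s0.
Proof.
  intros E s0 s1 Ht.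
  apply (sim_coind (fun s1 s0 => exists E, trip X E s0 s1)); eauto.
  intros a1 a0 [E' Ht']. pose proof HX as [_ [Htrip _]]. split.
  - intros b1 Hs. destruct (env_bisim_steps_r _ _ _ _ Ht' Hs) as [r0 [Hr0 Htr]].
    destruct (proj1 (proj2 (proj2 (proj2 (proj2 (Htrip _ _ _ Htr))))) I)
      as [v0 [Hv0 [Hvv HE]]].
    destruct v0 as [|b0| | |]; try contradiction.
    exists b0; split; [eapply steps_trans; eauto|].
    intros v Hv. exists (add_pair E' (Lam b0) (Lam b1)).
    apply env_bisim_lam; auto. right; auto.
  - intros E1 t1 HE1 Hs. destruct (env_bisim_steps_r _ _ _ _ Ht' Hs) as [r0 [Hr0 Htr]].
    destruct (proj2 (proj2 (proj2 (proj2 (proj2 (Htrip _ _ _ Htr)))))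
                (stuck_pure_shift _ _ HE1)) as [t0' [Ht0' [Hst HE]]].
    assert (Hc : closed t0') by (eapply env_closed_l; [exact HE|right; auto]).
    destruct (stuck_pure_shift_inv _ Hc Hst) as [E0 [t0 [HE0 ->]]].
    exists E0, t0; split; [exact HE0|split; [eapply steps_trans; eauto|]].
    intros G HG HwG. exists (add_pair E' (plugE E0 (Shift t0)) (plugE E1 (Shift t1))).
    apply env_bisim_pure_shift; auto. right; auto.
Qed.

End EnvBisim.

Lemma approx0_simeq : forall a b, approx0 a b -> closed a /\ closed b /\ simeq a b.
Proof.
  intros a b [X [HX Ht]]. pose proof HX as [[_ Hwf] _].
  destruct (Hwf _ _ _ Ht) as [_ [? ?]].
  split; [|split; [|split]]; eauto using env_bisim_sim, env_bisim_sim_sym.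
Qed.

(** * Mutual similarity is an environmental bisimulation *)

Lemma simeq_sym : forall a b, simeq a b -> simeq b a.
Proof. intros a b []; split; auto. Qed.

Lemma simeq_steps_r : forall a b b', simeq a b -> steps b b' -> simeq a b'.
Proof. intros a b b' [Hab Hba] Hs; split; eauto using sim_steps_l, sim_steps_r. Qed.

Lemma simeq_step_step : forall a a' b b', simeq a b -> step a a' -> step b b' -> simeq a' b'.
Proof.
  intros a a' b b' Hab Ha Hb. apply simeq_sym, (simeq_steps_r _ a); [|apply step_steps, Ha].
  apply simeq_sym, (simeq_steps_r _ b); [exact Hab|apply step_steps, Hb].
Qed.

Lemma sim_value_not_stuck : forall a b, sim a b -> is_value a -> ~ stuck b.
Proof.
  intros a b H Ha Hb. destruct a as [|a0| | |]; try contradiction.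
  destruct (proj1 (sim_inv _ _ H) a0 (steps_refl _)) as [b1 [Hs _]].
  eapply stuck_steps_not_value; eauto; simpl; auto.
Qed.

Lemma simeq_value : forall s0 s1, closed s1 -> simeq s0 s1 -> is_value s0 ->
  exists v1, steps s1 v1 /\ is_value v1 /\ closed v1 /\ simeq s0 v1.
Proof.
  intros s0 s1 Hc Hs Hv. destruct s0 as [|b0| | |]; try contradiction.
  destruct (proj1 (sim_inv _ _ (proj1 Hs)) b0 (steps_refl _)) as [b1 [Hs1 _]].
  exists (Lam b1); split; [exact Hs1|split; [simpl; auto|split]].
  - exact (steps_closed _ _ Hc Hs1).
  - eapply simeq_steps_r; eauto.
Qed.

Lemma simeq_stuck : forall s0 s1, closed s0 -> closed s1 -> simeq s0 s1 -> stuck s0 ->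
  exists t1, steps s1 t1 /\ stuck t1 /\ closed t1 /\ simeq s0 t1.
Proof.
  intros s0 s1 Hc0 Hc1 Hs Hst. destruct (stuck_pure_shift_inv _ Hc0 Hst) as [E0 [t0 [HE0 ->]]].
  destruct (proj2 (sim_inv _ _ (proj1 Hs)) E0 t0 HE0 (steps_refl _))
    as [E1 [t1 [HE1 [Hs1 _]]]].
  exists (plugE E1 (Shift t1)); split; [exact Hs1|split; [apply stuck_pure_shift; auto|split]].
  - exact (steps_closed _ _ Hc1 Hs1).
  - eapply simeq_steps_r; eauto.
Qed.

Definition simeq_env (E : rel) : Prop := is_env E /\ forall a b, E a b -> simeq a b.

Definition simeq_envrel : envrel := {|
  envs := simeq_env;
  trip := fun E s0 s1 => simeq_env E /\ closed s0 /\ closed s1 /\ simeq s0 s1 |}.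

Lemma simeq_env_add : forall E a b, simeq_env E -> closed a -> closed b ->
  (is_value a /\ is_value b) \/ (stuck a /\ stuck b) -> simeq a b ->
  simeq_env (add_pair E a b).
Proof.
  intros E a b [Henv Hs] Ha Hb Hvs Hab. split.
  - intros x y [Hxy|[-> ->]]; auto. unfold normal_form. intuition.
  - intros x y [Hxy|[-> ->]]; auto.
Qed.

Lemma simeq_envrel_trip : forall E s0 s1, trip simeq_envrel E s0 s1 ->
  (forall s0', step s0 s0' -> exists s1', steps s1 s1' /\ trip simeq_envrel E s0' s1') /\
  (is_value s0 -> exists v1, steps s1 v1 /\ is_value v1 /\
                             envs simeq_envrel (add_pair E s0 v1)) /\
  (stuck s0 -> exists s1', steps s1 s1' /\ stuck s1' /\
                           envs simeq_envrel (add_pair E s0 s1')) /\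
  (forall s1', step s1 s1' -> exists s0', steps s0 s0' /\ trip simeq_envrel E s0' s1') /\
  (is_value s1 -> exists v0, steps s0 v0 /\ is_value v0 /\
                             envs simeq_envrel (add_pair E v0 s1)) /\
  (stuck s1 -> exists s0', steps s0 s0' /\ stuck s0' /\
                           envs simeq_envrel (add_pair E s0' s1)).
Proof.
  simpl. intros E s0 s1 [HE [Hc0 [Hc1 Hs]]]. pose proof (simeq_sym _ _ Hs) as Hs'.
  split; [|split; [|split; [|split; [|split]]]].
  - intros s0' Hst. exists s1; split; [constructor|].
    split; [exact HE|split; [exact (step_closed _ _ Hc0 Hst)|split; [exact Hc1|split]]].
    + apply (sim_steps_l s0); [apply Hs|apply step_steps, Hst].
    + apply (sim_steps_r _ s0); [apply Hs|apply step_steps, Hst].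
  - intros Hv. destruct (simeq_value _ _ Hc1 Hs Hv) as [v1 [Hv1 [Hvv [Hcv Hsv]]]].
    exists v1; split; [exact Hv1|split; [exact Hvv|]]. apply simeq_env_add; auto.
  - intros Hst. destruct (simeq_stuck _ _ Hc0 Hc1 Hs Hst) as [t1 [Ht1 [Hst1 [Hct Hst']]]].
    exists t1; split; [exact Ht1|split; [exact Hst1|]]. apply simeq_env_add; auto.
  - intros s1' Hst. exists s0; split; [constructor|].
    split; [exact HE|split; [exact Hc0|split; [exact (step_closed _ _ Hc1 Hst)|split]]].
    + apply (sim_steps_r _ s1); [apply Hs|apply step_steps, Hst].
    + apply (sim_steps_l s1); [apply Hs|apply step_steps, Hst].
  - intros Hv. destruct (simeq_value _ _ Hc0 Hs' Hv) as [v0 [Hv0 [Hvv [Hcv Hsv]]]].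
    exists v0; split; [exact Hv0|split; [exact Hvv|]].
    apply simeq_env_add; auto using simeq_sym.
  - intros Hst. destruct (simeq_stuck _ _ Hc1 Hc0 Hs' Hst) as [t0 [Ht0 [Hst0 [Hct Hst']]]].
    exists t0; split; [exact Ht0|split; [exact Hst0|]].
    apply simeq_env_add; auto using simeq_sym.
Qed.

Lemma simeq_envrel_env : forall E, envs simeq_envrel E ->
  (forall b0 b1 v0 v1, E (Lam b0) (Lam b1) -> is_value v0 -> is_value v1 ->
     tilde E v0 v1 -> trip simeq_envrel E (subst0 b0 v0) (subst0 b1 v1)) /\
  (forall E0 E1 s0 s1, is_pure E0 -> is_pure E1 ->
     E (plugE E0 (Shift s0)) (plugE E1 (Shift s1)) ->
     forall E0' E1', is_pure E0' -> is_pure E1' -> hat E E0' E1' ->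
     trip simeq_envrel E (Reset (subst0 s0 (kont E0' E0))) (Reset (subst0 s1 (kont E1' E1)))).
Proof.
  simpl. intros E [Henv HEs].
  assert (HR : forall a b, E a b -> closed a /\ closed b /\ simeq a b)
    by (intros a b Hab; destruct (Henv a b Hab) as [? [? _]]; auto).
  split.
  - intros b0 b1 v0 v1 Hb Hv0 Hv1 [Ht [Hcv0 Hcv1]].
    destruct (HR _ _ Hb) as [Hcb0 [Hcb1 _]].
    assert (Happ : simeq (App (Lam b0) v0) (App (Lam b1) v1)).
    { apply (tildeI_simeq E HR); [apply ti_app; [apply ti_base|]|split|split]; auto. }
    split; [split; auto|split; [apply closed_subst0|split; [apply closed_subst0|]]]; auto.
    apply (simeq_step_step _ _ _ _ Happ);
      apply (contract_step EHole); simpl; auto; constructor; auto.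
  - intros E0 E1 s0 s1 HE0 HE1 Hst E0' E1' HE0' HE1' Hhat.
    destruct (HR _ _ Hst) as [Hc0 [Hc1 _]]. destruct (hat_wf _ _ _ Hhat) as [Hw0 Hw1].
    assert (Hplug : simeq (Reset (plugE E0' (plugE E0 (Shift s0))))
                          (Reset (plugE E1' (plugE E1 (Shift s1))))).
    { apply (tildeI_simeq E HR); try (apply wf_plugE; split; auto).
      apply ti_reset, hat_plugE_tildeI, ti_base; auto. }
    pose proof (reset_shift_step _ _ s0 HE0' HE0) as Hst0.
    pose proof (reset_shift_step _ _ s1 HE1' HE1) as Hst1.
    split; [split; auto|].
    split; [eapply step_closed; [|exact Hst0]|split; [eapply step_closed; [|exact Hst1]|]].
    + apply wf_plugE; split; auto.
    + apply wf_plugE; split; auto.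
    + exact (simeq_step_step _ _ _ _ Hplug Hst0 Hst1).
Qed.

Lemma simeq_envrel_bisim : env_bisim simeq_envrel.
Proof.
  split; [|split].
  - split; simpl; [intros E []; auto|intros E t0 t1 [[? _] [? [? _]]]; auto].
  - exact simeq_envrel_trip.
  - exact simeq_envrel_env.
Qed.

Lemma E0_simeq_env : simeq_env E0.
Proof.
  assert (HE : forall a b, E0 a b -> simeq a b).
  { intros a b [_ [_ [Ht [Ha Hb]]]]. eapply tildeI_simeq; eauto using approx0_simeq. }
  split; auto. intros a b Hab. destruct (HE a b Hab) as [Sab Sba].
  destruct Hab as [Na [Nb [_ [Ha Hb]]]]. do 4 (split; auto).
  destruct Na as [Va|Sa], Nb as [Vb|Sb]; auto; exfalso.
  - exact (sim_value_not_stuck _ _ Sab Va Sb).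
  - exact (sim_value_not_stuck _ _ Sba Vb Sa).
Qed.

Theorem lemma9 : forall t0 t1 : term,
  closed t0 -> closed t1 -> approx0 t0 t1 ->
  forall C : ctx, closed (plugC C t0) -> closed (plugC C t1) ->
  approx E0 (plugC C t0) (plugC C t1).
Proof.
  intros t0 t1 _ _ Ha C HC0 HC1.
  exists simeq_envrel; split; [exact simeq_envrel_bisim|].
  split; [exact E0_simeq_env|split; [exact HC0|split; [exact HC1|]]].
  apply (tildeI_simeq approx0 approx0_simeq); auto.
  apply tildeI_plugC, ti_base; auto.
Qed.
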